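(* Let $T$, $\mathcal{S}=\mathcal{S}_+\cup\mathcal{S}_-$, $\Psi$, $U$, $\lambda$ and $P_\lambda$ be as in the context. Consider the discrete-time QBD with phase space $\mathcal{S}$ and transition blocks $$A_{-1}=\begin{bmatrix}0&0\\0&(I-\lambda^{-1}U)^{-1}\end{bmatrix},\quad A_0=\begin{bmatrix}0&P_{\lambda+-}\\0&0\end{bmatrix},\quad A_1=\begin{bmatrix}P_{\lambda++}&0\\0&0\end{bmatrix}.$$ Then its $\mathcal{G}$-matrix is $$\mathcal{G}_A=\begin{bmatrix}0&\Psi\\0&(I-\lambda^{-1}U)^{-1}\end{bmatrix}.$$
   Context: $T$ is the generator of a continuous-time Markov chain on a finite set $\mathcal{S}=\mathcal{S}_+\cup\mathcal{S}_-$ (disjoint, both nonempty), partitioned into blocks $T_{++},T_{+-},T_{-+},T_{--}$ according to $\mathcal{S}_\pm$. $\Psi$ is the minimal nonnegative solution of $T_{+-}+\Psi T_{--}+T_{++}\Psi+\Psi T_{-+}\Psi=0$ (the first-return probability matrix of the unit-rate fluid queue with phase generator $T$, rates $+1$ on $\mathcal{S}_+$ and $-1$ on $\mathcal{S}_-$), and $U:=T_{--}+T_{-+}\Psi$. $\lambda>0$ satisfies $\lambda\ge\max_i|T_{ii}|$, and $P_\lambda:=I+\lambda^{-1}T$ with blocks $P_{\lambda++}$ etc. A discrete-time quasi-birth-death process (QBD) with transition blocks $L_{-1},L_0,L_1$ is a Markov chain $\{(Y_n,\kappa_n)\}$ on $\mathbb{Z}\times\mathcal{S}$ with $\mathbb{P}[Y_n=k+d,\kappa_n=j\mid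 Y_{n-1}=k,\kappa_{n-1}=i]=(L_d)_{ij}$ for $d\in\{-1,0,1\}$. Its $\mathcal{G}$-matrix has entries $\mathcal{G}_{ij}=\mathbb{P}[\theta<\infty,\kappa_\theta=j\mid Y_0=k,\kappa_0=i]$, where $\theta=\inf\{n>0:Y_n=k-1\}$. All matrices are partitioned into blocks according to $\mathcal{S}_+,\mathcal{S}_-$. *)

From HB Require Import structures.
From mathcomp Require Import all_boot all_order all_algebra.
From mathcomp Require Import classical_sets reals topology normedtype sequences.
Set Implicit Arguments. Unset Strict Implicit. Unset Printing Implicit Defensive.
Import Order.TTheory GRing.Theory Num.Theory.
Import numFieldNormedType.Exports.
Local Open Scope ring_scope.
Local Open Scope classical_set_scope.

Section Defs.
Variable R : realType.

Definition is_generator (m : nat) (T : 'M[R]_m) : Prop :=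
  (forall i j, i != j -> 0 <= T i j) /\ (forall i, \sum_j T i j = 0).

Definition mx_nonneg (m n : nat) (X : 'M[R]_(m, n)) : Prop :=
  forall i j, 0 <= X i j.

(* The matrix Riccati equation
   T_{+-} + X T_{--} + T_{++} X + X T_{-+} X = 0,
   with blocks of T w.r.t. S_+ = first p indices, S_- = last q indices. *)
Definition riccati (p q : nat) (T : 'M[R]_(p + q)) (X : 'M[R]_(p, q)) : Prop :=
  ursubmx T + X *m drsubmx T + ulsubmx T *m X + X *m dlsubmx T *m X = 0.

Definition is_min_nonneg_sol (p q : nat) (Pr : 'M[R]_(p, q) -> Prop)
  (X : 'M[R]_(p, q)) : Prop :=
  [/\ Pr X, mx_nonneg X &
      forall Y, Pr Y -> mx_nonneg Y -> forall i j, X i j <= Y i j].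

(* A level increment is encoded by d : 'I_3, meaning d - 1 in {-1,0,1}. *)
Definition incr (d : 'I_3) : int := (nat_of_ord d)%:Z - 1.

Definition qbd_step (m : nat) (Lm1 L0 L1 : 'M[R]_m) (d : 'I_3) : 'M[R]_m :=
  if nat_of_ord d == 0%N then Lm1 else if nat_of_ord d == 1%N then L0 else L1.

Definition path_mx (m : nat) (Lm1 L0 L1 : 'M[R]_m) (s : seq 'I_3) : 'M[R]_m :=
  foldr (fun d M => qbd_step Lm1 L0 L1 d *m M) 1%:M s.

Definition first_passage (s : seq 'I_3) : bool :=
  (\sum_(d <- s) incr d == -1) &&
  all (fun t => \sum_(d <- take t s) incr d != -1) (iota 1 (size s).-1).

(* (fp n)_{ij} = P[theta = n, kappa_theta = j | Y_0 = k, kappa_0 = i]. *)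
Definition first_passage_mx (m : nat) (Lm1 L0 L1 : 'M[R]_m) (n : nat) : 'M[R]_m :=
  \sum_(s : n.-tuple 'I_3 | first_passage s) path_mx Lm1 L0 L1 s.

(* G is the G-matrix: G_{ij} = P[theta < oo, kappa_theta = j | ...]
   = sum_{n >= 0} P[theta = n, kappa_theta = j | ...]. *)
Definition is_G_matrix (m : nat) (Lm1 L0 L1 G : 'M[R]_m) : Prop :=
  forall i j,
    (fun N : nat => \sum_(n < N) first_passage_mx Lm1 L0 L1 n i j) @ \oo --> G i j.

End Defs.

(* Uniformization: for the stochastic matrix P = I + T/lambda the Riccati equation reads
   riccati_map P Psi = 2 Psi, and V = 2I - (P_{--} + P_{-+} Psi).  Since Psi is the limit of
   the monotone iteration X -> riccati_map P X / 2 from 0, its row sums are at most 1, so V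
   is an M-matrix: invertible with nonnegative inverse W, and Psi = P_{+-} W + P_{++} Psi W.
   In the QBD the only first passages of nonzero weight are one step down and the excursions
   of m steps up, one step at the same level and m + 1 steps down, so the partial sums F_N of
   the first-passage matrices satisfy F_{N+3} = A_{-1} + A_0 A_{-1} + A_1 F_{N+1} A_{-1}.
   They increase to a solution S of this equation below G = [0 Psi; 0 W]; the upper-right
   block of S is then a nonnegative supersolution of the Riccati equation, and minimality of
   Psi forces S = G. *)

From HB Require Import structures.
From mathcomp Require Import all_boot all_order all_algebra.
From mathcomp Require Import classical_sets reals topology normedtype sequences.
From mathcomp Require Import boolp zify lra.
Import Order.TTheory GRing.Theory Num.Theory.
Import numFieldNormedType.Exports.
Local Open Scope ring_scope.
Local Open Scope classical_set_scope.

Set Implicit Arguments.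
Unset Strict Implicit.
Unset Printing Implicit Defensive.

Section MatrixOrder.
Variable R : realType.

Definition mx_le m n (A B : 'M[R]_(m, n)) : Prop := forall i j, A i j <= B i j.

Section Dims.
Variables m n k : nat.
Implicit Types A B C D : 'M[R]_(m, n).

Lemma mx_le_refl A : mx_le A A.
Proof. by move=> i j. Qed.

Lemma mx_le_trans B A C : mx_le A B -> mx_le B C -> mx_le A C.
Proof. by move=> hAB hBC i j; exact: le_trans (hAB i j) (hBC i j). Qed.

Lemma mx_le_anti A B : mx_le A B -> mx_le B A -> A = B.
Proof. by move=> hAB hBA; apply/matrixP => i j; apply/eqP; rewrite eq_le hAB hBA. Qed.

Lemma mx_nonnegE A : mx_nonneg A <-> mx_le 0 A.
Proof. by split=> h i j; move: (h i j); rewrite mxE. Qed.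

Lemma mx_nonneg_le A B : mx_nonneg A -> mx_le A B -> mx_nonneg B.
Proof. by move=> hA hAB i j; exact: le_trans (hA i j) (hAB i j). Qed.

Lemma mx_leD A B C D : mx_le A B -> mx_le C D -> mx_le (A + C) (B + D).
Proof. by move=> hAB hCD i j; rewrite !mxE lerD. Qed.

Lemma mx_leZ (c : R) A B : 0 <= c -> mx_le A B -> mx_le (c *: A) (c *: B).
Proof. by move=> c0 hAB i j; rewrite !mxE ler_wpM2l. Qed.

Lemma mx_le_mul2r (C : 'M[R]_(n, k)) A B :
  mx_nonneg C -> mx_le A B -> mx_le (A *m C) (B *m C).
Proof. by move=> hC hAB i j; rewrite !mxE; apply: ler_sum => l _; exact: ler_wpM2r. Qed.

Lemma mx_le_mul2l (C : 'M[R]_(k, m)) A B :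
  mx_nonneg C -> mx_le A B -> mx_le (C *m A) (C *m B).
Proof. by move=> hC hAB i j; rewrite !mxE; apply: ler_sum => l _; exact: ler_wpM2l. Qed.

Lemma mx_nonneg0 : mx_nonneg (0 : 'M[R]_(m, n)).
Proof. by move=> i j; rewrite mxE. Qed.

Lemma mx_nonnegD A B : mx_nonneg A -> mx_nonneg B -> mx_nonneg (A + B).
Proof. by move=> hA hB i j; rewrite mxE addr_ge0. Qed.

Lemma mx_nonnegZ (c : R) A : 0 <= c -> mx_nonneg A -> mx_nonneg (c *: A).
Proof. by move=> c0 hA i j; rewrite mxE mulr_ge0. Qed.

Lemma mx_nonneg_mul A (C : 'M[R]_(n, k)) :
  mx_nonneg A -> mx_nonneg C -> mx_nonneg (A *m C).
Proof. by move=> hA hC i j; rewrite mxE; apply: sumr_ge0 => l _; exact: mulr_ge0. Qed.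

Lemma scale_half_double A : 2^-1 *: (A *+ 2) = A.
Proof. by rewrite -[A *+ 2]scaler_nat scalerA mulVf ?scale1r // pnatr_eq0. Qed.

Lemma mx_le_addr A B : mx_nonneg B -> mx_le A (A + B).
Proof. by move=> hB i j; rewrite mxE lerDl. Qed.

End Dims.

Lemma mx_nonneg_block m1 m2 n1 n2 (A : 'M[R]_(m1, n1)) (B : 'M[R]_(m1, n2))
    (C : 'M[R]_(m2, n1)) (D : 'M[R]_(m2, n2)) :
  mx_nonneg A -> mx_nonneg B -> mx_nonneg C -> mx_nonneg D ->
  mx_nonneg (block_mx A B C D).
Proof.
move=> hA hB hC hD i j; rewrite -[i]splitK -[j]splitK.
case: (split i) => i'; case: (split j) => j'.
- by rewrite block_mxEul.
- by rewrite block_mxEur.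
- by rewrite block_mxEdl.
- by rewrite block_mxEdr.
Qed.

Lemma mx_nonneg_ulsubmx m1 m2 n1 n2 (A : 'M[R]_(m1 + m2, n1 + n2)) :
  mx_nonneg A -> mx_nonneg (ulsubmx A).
Proof. by move=> hA i j; rewrite !mxE; exact: hA. Qed.

Lemma mx_nonneg_ursubmx m1 m2 n1 n2 (A : 'M[R]_(m1 + m2, n1 + n2)) :
  mx_nonneg A -> mx_nonneg (ursubmx A).
Proof. by move=> hA i j; rewrite !mxE; exact: hA. Qed.

Lemma mx_nonneg_dlsubmx m1 m2 n1 n2 (A : 'M[R]_(m1 + m2, n1 + n2)) :
  mx_nonneg A -> mx_nonneg (dlsubmx A).
Proof. by move=> hA i j; rewrite !mxE; exact: hA. Qed.

Lemma mx_nonneg_drsubmx m1 m2 n1 n2 (A : 'M[R]_(m1 + m2, n1 + n2)) :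
  mx_nonneg A -> mx_nonneg (drsubmx A).
Proof. by move=> hA i j; rewrite !mxE; exact: hA. Qed.

Lemma mx_le_ursubmx m1 m2 n1 n2 (A B : 'M[R]_(m1 + m2, n1 + n2)) :
  mx_le A B -> mx_le (ursubmx A) (ursubmx B).
Proof. by move=> hAB i j; rewrite !mxE; exact: hAB. Qed.

End MatrixOrder.

Section MatrixLimits.
Variables (R : realType) (m n k : nat).
Implicit Types (X Y : nat -> 'M[R]_(m, n)) (A B : 'M[R]_(m, n)).

Definition mx_cvg m' n' (X : nat -> 'M[R]_(m', n')) (A : 'M[R]_(m', n')) : Prop :=
  forall i j, (fun t => X t i j) @ \oo --> A i j.

Lemma mx_cvg_cst A : mx_cvg (fun=> A) A.
Proof. by move=> i j; exact: cvg_cst. Qed.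

Lemma eq_mx_cvg X Y A : (forall t, X t = Y t) -> mx_cvg X A -> mx_cvg Y A.
Proof. by move=> XY hX; have -> : Y = X by apply/funext => t; rewrite XY. Qed.

Lemma mx_cvgD X Y A B : mx_cvg X A -> mx_cvg Y B -> mx_cvg (fun t => X t + Y t) (A + B).
Proof. by move=> hX hY i j; rewrite mxE; under eq_cvg do rewrite mxE; exact: cvgD. Qed.

Lemma mx_cvgZ (c : R) X A : mx_cvg X A -> mx_cvg (fun t => c *: X t) (c *: A).
Proof.
by move=> hX i j; rewrite mxE; under eq_cvg do rewrite mxE; exact: cvgM (cvg_cst c) (hX i j).
Qed.

Lemma mx_cvgM X (Y : nat -> 'M[R]_(n, k)) A (B : 'M[R]_(n, k)) :
  mx_cvg X A -> mx_cvg Y B -> mx_cvg (fun t => X t *m Y t) (A *m B).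
Proof.
move=> hX hY i j; rewrite mxE; under eq_cvg do rewrite mxE.
by apply: cvg_big => [|l _]; [exact: add_continuous | exact: cvgM].
Qed.

Lemma mx_cvgS X A : mx_cvg X A -> mx_cvg (fun t => X t.+1) A.
Proof. by move=> hX i j; have := hX i j; rewrite -cvg_shiftS. Qed.

Lemma mx_le_cvg X Y A B :
  mx_cvg X A -> mx_cvg Y B -> (forall t, mx_le (X t) (Y t)) -> mx_le A B.
Proof.
move=> hX hY hXY i j; apply: ler_cvg_to (hX i j) (hY i j) _.
by apply: nearW => t; exact: hXY.
Qed.

Lemma mx_cvg_unique X A B : mx_cvg X A -> mx_cvg X B -> A = B.
Proof.
move=> hA hB; apply: mx_le_anti.
  by apply: mx_le_cvg hA hB _ => t; exact: mx_le_refl.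
by apply: mx_le_cvg hB hA _ => t; exact: mx_le_refl.
Qed.

Lemma mx_cvg_nondecreasing X B :
  (forall t, mx_le (X t) (X t.+1)) -> (forall t, mx_le (X t) B) -> exists A, mx_cvg X A.
Proof.
move=> hX hB; exists (\matrix_(i, j) sup (range (fun t => X t i j))) => i j.
rewrite mxE; apply: nondecreasing_cvgn.
  by apply/nondecreasing_seqP => t; exact: hX.
by exists (B i j) => _ [t _ <-]; exact: hB.
Qed.

End MatrixLimits.

Arguments mx_cvg_cst {R m n} A.
Arguments mx_cvgZ {R m n} c {X A}.

Section Substochastic.
Variables (R : realType) (n : nat).

Definition substochastic (Q : 'M[R]_n) : Prop :=
  mx_nonneg Q /\ mx_le (Q *m const_mx 1) (const_mx 1 : 'cV_n).

Variables (Q : 'M[R]_n) (c : R).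
Hypotheses (hQ : substochastic Q) (c_gt1 : 1 < c).

(* Minimum principle: inspect a row where the column of Z attains its minimum. *)
Lemma substochastic_sub_monotone k (Z : 'M[R]_(n, k)) :
  mx_nonneg ((c%:M - Q) *m Z) -> mx_nonneg Z.
Proof.
move=> hZ i j.
have [i0 _ i0_min] := @arg_minP _ _ _ i xpredT (fun l => Z l j) isT.
apply: le_trans (i0_min i isT).
have := hZ i0 j; rewrite mulmxBl mul_scalar_mx !mxE => hz.
have row_sum : \sum_l Q i0 l <= 1.
  by have := hQ.2 i0 0; rewrite !mxE; under eq_bigr do rewrite mxE mulr1.
have row_sum_ge0 : 0 <= \sum_l Q i0 l by apply: sumr_ge0 => l _; exact: hQ.1.
have QZ : Z i0 j * \sum_l Q i0 l <= \sum_l Q i0 l * Z l j.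
  rewrite mulr_sumr; apply: ler_sum => l _.
  by rewrite mulrC; apply: ler_wpM2l; [exact: hQ.1 | exact: i0_min].
move: (Z i0 j) (\sum_l Q i0 l) (\sum_l Q i0 l * Z l j) hz QZ row_sum row_sum_ge0.
move=> z r S hz QZ r_le1 r_ge0; have [//|z_lt0] := leP 0 z.
have : 0 <= (1 - r) * - z by rewrite mulr_ge0 // ?subr_ge0 // oppr_ge0 ltW.
have : 0 < (c - 1) * - z by rewrite mulr_gt0 // ?subr_gt0 // oppr_gt0.
lra.
Qed.

Lemma substochastic_sub_unitmx : (c%:M - Q) \in unitmx.
Proof.
rewrite -unitmx_tr -row_free_unit -kermx_eq0.
set K := kermx (c%:M - Q)^T.
have hK : (c%:M - Q) *m K^T = 0.
  have : (K *m (c%:M - Q)^T)^T = 0 by rewrite mulmx_ker trmx0.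
  by rewrite trmx_mul trmxK.
have Kt_ge0 : mx_nonneg K^T by apply: substochastic_sub_monotone; rewrite hK; exact: mx_nonneg0.
have Kt_le0 : mx_nonneg (- K^T).
  by apply: substochastic_sub_monotone; rewrite mulmxN hK oppr0; exact: mx_nonneg0.
by apply/eqP/matrixP => i j; have := Kt_ge0 j i; have := Kt_le0 j i; rewrite !mxE; lra.
Qed.

Lemma substochastic_sub_invmx_nonneg : mx_nonneg (invmx (c%:M - Q)).
Proof.
apply: substochastic_sub_monotone; rewrite mulmxV ?substochastic_sub_unitmx //.
by move=> i j; rewrite mxE ler0n.
Qed.

End Substochastic.

Section UniformizedRiccati.
Variables (R : realType) (p q : nat) (P : 'M[R]_(p + q)).
Hypothesis hP : substochastic P.

Local Notation Ppp := (ulsubmx P).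
Local Notation Ppm := (ursubmx P).
Local Notation Pmp := (dlsubmx P).
Local Notation Pmm := (drsubmx P).
Local Notation e n := (const_mx 1 : 'cV[R]_n).

Let Ppp_ge0 : mx_nonneg Ppp := mx_nonneg_ulsubmx hP.1.
Let Ppm_ge0 : mx_nonneg Ppm := mx_nonneg_ursubmx hP.1.
Let Pmp_ge0 : mx_nonneg Pmp := mx_nonneg_dlsubmx hP.1.
Let Pmm_ge0 : mx_nonneg Pmm := mx_nonneg_drsubmx hP.1.

Lemma substochastic_block_rows :
  mx_le (Ppp *m e p + Ppm *m e q) (e p) /\ mx_le (Pmp *m e p + Pmm *m e q) (e q).
Proof.
have := hP.2; rewrite -[P]submxK -!col_mx_const mul_block_col !submxK => rows.
split=> i j.
  by have := rows (lshift q i) j; rewrite !col_mxEu.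
by have := rows (rshift p i) j; rewrite !col_mxEd.
Qed.

Definition riccati_map (Y : 'M[R]_(p, q)) : 'M[R]_(p, q) :=
  Ppm + Y *m Pmm + Ppp *m Y + Y *m Pmp *m Y.

Lemma riccati_map_nonneg Y : mx_nonneg Y -> mx_nonneg (riccati_map Y).
Proof.
move=> hY; rewrite /riccati_map.
by repeat (apply: mx_nonnegD || apply: mx_nonneg_mul).
Qed.

Lemma riccati_map_mono Y Z :
  mx_nonneg Y -> mx_le Y Z -> mx_le (riccati_map Y) (riccati_map Z).
Proof.
move=> hY hYZ; rewrite /riccati_map.
apply: mx_leD; last first.
  apply: mx_le_trans (mx_le_mul2l (mx_nonneg_mul hY Pmp_ge0) hYZ) _.
  by apply: mx_le_mul2r (mx_nonneg_le hY hYZ) _; exact: mx_le_mul2r.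
apply: mx_leD; last exact: mx_le_mul2l.
by apply: mx_leD; [exact: mx_le_refl | exact: mx_le_mul2r].
Qed.

Lemma riccati_map_rows Y : mx_nonneg Y -> mx_le (Y *m e q) (e p) ->
  mx_le (riccati_map Y *m e q) (e p *+ 2).
Proof.
move=> hY hYe; have [rows_up rows_down] := substochastic_block_rows.
have hY_rows : mx_le (Y *m (Pmp *m e p + Pmm *m e q)) (e p).
  exact: mx_le_trans (mx_le_mul2l hY rows_down) hYe.
apply: mx_le_trans (mx_leD rows_up hY_rows).
rewrite mulmxDr [X in mx_le _ X]addrACA [X in mx_le _ X]addrC [X in mx_le _ X]addrA.
rewrite !mulmxDl -!mulmxA.
apply: mx_leD; last exact: mx_le_mul2l hY (mx_le_mul2l Pmp_ge0 hYe).
by apply: mx_leD; [exact: mx_le_refl | exact: mx_le_mul2l].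
Qed.

Lemma riccati_map_cvg X Y :
  mx_cvg X Y -> mx_cvg (fun k => riccati_map (X k)) (riccati_map Y).
Proof.
move=> hX; rewrite /riccati_map.
by repeat (apply: mx_cvgD || apply: mx_cvgM || apply: mx_cvg_cst).
Qed.

Fixpoint riccati_iter k : 'M[R]_(p, q) :=
  if k is k'.+1 then 2^-1 *: riccati_map (riccati_iter k') else 0.

Lemma riccati_iter_nonneg k : mx_nonneg (riccati_iter k).
Proof.
elim: k => [|k IHk] /=; first exact: mx_nonneg0.
by apply: mx_nonnegZ; [rewrite invr_ge0 | exact: riccati_map_nonneg].
Qed.

Lemma riccati_iter_nondecreasing k : mx_le (riccati_iter k) (riccati_iter k.+1).
Proof.
elim: k => [|k IHk]; first exact/mx_nonnegE/riccati_iter_nonneg.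
apply: mx_leZ; first by rewrite invr_ge0.
exact: riccati_map_mono (riccati_iter_nonneg k) IHk.
Qed.

Lemma riccati_iter_le_supersol Y k : mx_nonneg Y ->
  mx_le (riccati_map Y) (Y *+ 2) -> mx_le (riccati_iter k) Y.
Proof.
move=> hY hGY; elim: k => [|k IHk]; first exact/mx_nonnegE.
rewrite /= -(scale_half_double Y); apply: mx_leZ; first by rewrite invr_ge0.
exact: mx_le_trans (riccati_map_mono (riccati_iter_nonneg k) IHk) hGY.
Qed.

Lemma riccati_iter_rows k : mx_le (riccati_iter k *m e q) (e p).
Proof.
elim: k => [|k IHk] /=; first by move=> i j; rewrite mul0mx !mxE.
rewrite -scalemxAl -(scale_half_double (e p)); apply: mx_leZ; first by rewrite invr_ge0.
exact: riccati_map_rows (riccati_iter_nonneg k) IHk.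
Qed.

Variable Psi : 'M[R]_(p, q).
Hypothesis hPsi : is_min_nonneg_sol (fun Y => riccati_map Y = Y *+ 2) Psi.

Let Psi_ge0 : mx_nonneg Psi := let: And3 _ h _ := hPsi in h.

Lemma riccati_iter_cvg : mx_cvg riccati_iter Psi.
Proof.
have [Psi_sol _ Psi_min] := hPsi.
have Psi_super : mx_le (riccati_map Psi) (Psi *+ 2) by rewrite Psi_sol; exact: mx_le_refl.
have iter_le_Psi k := riccati_iter_le_supersol k Psi_ge0 Psi_super.
have [L iter_cvg] := mx_cvg_nondecreasing riccati_iter_nondecreasing iter_le_Psi.
have L_ge0 : mx_nonneg L.
  apply/mx_nonnegE; apply: mx_le_cvg (mx_cvg_cst 0) iter_cvg _ => k.
  exact/mx_nonnegE/riccati_iter_nonneg.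
have L_sol : riccati_map L = L *+ 2.
  have L_half := mx_cvg_unique (mx_cvgS iter_cvg) (mx_cvgZ 2^-1 (riccati_map_cvg iter_cvg)).
  by rewrite [in RHS]L_half -[_ *+ 2]scaler_nat scalerA mulfV ?scale1r // pnatr_eq0.
suff -> : Psi = L by [].
apply: mx_le_anti; first exact: Psi_min.
exact: mx_le_cvg iter_cvg (mx_cvg_cst Psi) iter_le_Psi.
Qed.

Lemma min_sol_le_supersol Y : mx_nonneg Y ->
  mx_le (riccati_map Y) (Y *+ 2) -> mx_le Psi Y.
Proof.
move=> hY hGY; apply: mx_le_cvg riccati_iter_cvg (mx_cvg_cst Y) _ => k.
exact: riccati_iter_le_supersol.
Qed.

Lemma min_sol_rows : mx_le (Psi *m e q) (e p).
Proof.
apply: mx_le_cvg (mx_cvgM riccati_iter_cvg (mx_cvg_cst (e q))) (mx_cvg_cst (e p)) _.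
exact: riccati_iter_rows.
Qed.

(* [PU] is the uniformization [I + U/lambda] of the paper's [U]; [VU] is [I - U/lambda]. *)
Definition PU : 'M[R]_q := Pmm + Pmp *m Psi.
Definition VU : 'M[R]_q := 2%:M - PU.

Lemma PU_substochastic : substochastic PU.
Proof.
split; first by apply: mx_nonnegD => //; exact: mx_nonneg_mul.
have [_ rows_down] := substochastic_block_rows.
apply: mx_le_trans rows_down; rewrite /PU mulmxDl addrC -mulmxA.
by apply: mx_leD; [exact: mx_le_mul2l min_sol_rows | exact: mx_le_refl].
Qed.

Let two_gt1 : 1 < 2 :> R. Proof. by rewrite ltr1n. Qed.

Lemma VU_unitmx : VU \in unitmx.
Proof. exact: substochastic_sub_unitmx PU_substochastic two_gt1. Qed.

Lemma invmx_VU_nonneg : mx_nonneg (invmx VU).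
Proof. exact: substochastic_sub_invmx_nonneg PU_substochastic two_gt1. Qed.

Lemma riccati_mapE Y :
  riccati_map Y = Y *+ 2 + (Ppm + Ppp *m Y - Y *m VU) + Y *m Pmp *m (Y - Psi).
Proof.
rewrite /riccati_map /VU /PU mulmxBr mul_mx_scalar scaler_nat mulmxDr mulmxA mulmxBr.
move: (Y *m Pmm) (Ppp *m Y) (Y *m Pmp *m Y) (Y *m Pmp *m Psi) => a b c d.
by rewrite mulr2n; apply/matrixP => i j; rewrite !mxE; lra.
Qed.

Lemma riccati_fixpointP Y :
  Y = Ppm *m invmx VU + Ppp *m Y *m invmx VU <-> Y *m VU = Ppm + Ppp *m Y.
Proof.
rewrite -mulmxDl; split=> [hY | hYV]; first by rewrite {1}hY mulmxKV ?VU_unitmx.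
by rewrite -hYV mulmxK ?VU_unitmx.
Qed.

Lemma min_sol_fixpoint : Psi = Ppm *m invmx VU + Ppp *m Psi *m invmx VU.
Proof.
have [Psi_sol _ _] := hPsi; apply/riccati_fixpointP.
move: (riccati_mapE Psi); rewrite Psi_sol subrr mulmx0 addr0 -[LHS]addr0 => /addrI.
by move/eqP; rewrite eq_sym subr_eq0 => /eqP.
Qed.

Lemma riccati_fixpoint_eq_min_sol Y : mx_nonneg Y -> mx_le Y Psi ->
  Y = Ppm *m invmx VU + Ppp *m Y *m invmx VU -> Y = Psi.
Proof.
move=> hY hYPsi /riccati_fixpointP hYV.
have gap_ge0 : mx_nonneg (Y *m Pmp *m (Psi - Y)).
  apply: mx_nonneg_mul (mx_nonneg_mul hY Pmp_ge0) _.
  by move=> i j; rewrite !mxE subr_ge0.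
apply: mx_le_anti hYPsi (min_sol_le_supersol hY _).
rewrite riccati_mapE hYV subrr addr0 -opprB mulmxN => i j.
by rewrite mxE [X in _ + X]mxE gerDl oppr_le0.
Qed.

End UniformizedRiccati.

Definition lvl_down : 'I_3 := @Ordinal 3 0 isT.
Definition lvl_stay : 'I_3 := @Ordinal 3 1 isT.
Definition lvl_up : 'I_3 := @Ordinal 3 2 isT.

Lemma ord3P (d : 'I_3) : [\/ d = lvl_down, d = lvl_stay | d = lvl_up].
Proof.
by case: d => -[|[|[|k]]] // hk; [constructor 1 | constructor 2 | constructor 3]; apply: val_inj.
Qed.

Lemma sum_incr_nseq c d : \sum_(x <- nseq c d) incr x = (c%:Z * incr d)%R.
Proof.
elim: c => [|c IHc]; first by rewrite big_nil mul0r.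
by rewrite /= big_cons IHc -add1n PoszD mulrDl mul1r.
Qed.

Definition excursion m : seq 'I_3 := nseq m lvl_up ++ lvl_stay :: nseq m.+1 lvl_down.

Lemma size_excursion m : size (excursion m) = m.*2.+2.
Proof. by rewrite /excursion size_cat /= !size_nseq -addnn; lia. Qed.

Lemma sum_incr_excursion m : \sum_(d <- excursion m) incr d = -1.
Proof. by rewrite /excursion big_cat big_cons !sum_incr_nseq /incr /=; lia. Qed.

Lemma first_passage_down : first_passage [:: lvl_down].
Proof. by rewrite /first_passage /= big_cons big_nil. Qed.

Lemma first_passage_excursion m : first_passage (excursion m).
Proof.
apply/andP; split; first by rewrite sum_incr_excursion.
apply/allP => t; rewrite mem_iota size_excursion add1n /= => /andP [t_gt0 t_lt].
rewrite /excursion take_cat size_nseq; case: ltnP => [t_lt_m | t_ge_m].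
  by rewrite take_nseq ?(ltnW t_lt_m) // sum_incr_nseq /incr /=; apply/eqP; lia.
case Et: (t - m)%N => [|k]; first by rewrite take0 cats0 sum_incr_nseq /incr /=; apply/eqP; lia.
rewrite take_cons take_nseq; last by lia.
by rewrite big_cat big_cons !sum_incr_nseq /incr /=; apply/eqP; lia.
Qed.

Section SkipFreeQBD.
Variables (R : realType) (n : nat) (Lm1 L0 L1 : 'M[R]_n).

Local Notation path := (path_mx Lm1 L0 L1).
Local Notation fp := (first_passage_mx Lm1 L0 L1).

Lemma path_mx_cat s t : path (s ++ t) = path s *m path t.
Proof. by elim: s => [|d s IHs] /=; rewrite ?mul1mx // IHs mulmxA. Qed.

Lemma first_passage_mx_eq0 k :
  (forall t : k.-tuple 'I_3, first_passage t -> path t = 0) -> fp k = 0.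
Proof. by move=> fp0; apply: big1 => t /fp0. Qed.

Lemma first_passage_mx_eq_path k s : size s = k -> first_passage s ->
  (forall t : k.-tuple 'I_3, first_passage t -> path t != 0 -> val t = s) ->
  fp k = path s.
Proof.
move=> size_s fp_s uniq_s; pose t := @Tuple k _ s (introT eqP size_s).
rewrite /first_passage_mx (bigD1 t) //= big1 ?addr0 // => u /andP [fp_u u_neq_t].
apply/eqP; apply: contraT => /(uniq_s u fp_u) u_eq_s.
have u_eq_t : u = t by apply: val_inj.
by rewrite u_eq_t eqxx in u_neq_t.
Qed.

Hypotheses (L1Lm1 : L1 *m Lm1 = 0) (L0L1 : L0 *m L1 = 0) (L0L0 : L0 *m L0 = 0)
  (Lm1L1 : Lm1 *m L1 = 0) (Lm1L0 : Lm1 *m L0 = 0).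

(* By the hypotheses, only a step down may follow a step down or a step at the same
   level, and anything but a step down may follow a step up. *)
Lemma path_mx_neq0_shape s : path s != 0 ->
  [\/ exists c, s = nseq c lvl_down,
      exists a c, s = nseq a lvl_up ++ lvl_stay :: nseq c lvl_down
    | exists a, s = nseq a lvl_up].
Proof.
elim: s => [_|d s IHs]; first by constructor 1; exists 0%N.
rewrite [path _]/= => path_neq0.
have /IHs shape_s : path s != 0 by apply: contra path_neq0 => /eqP ->; rewrite mulmx0.
have killed A B X : A *m B = 0 -> A *m (B *m X) = 0 by move=> AB0; rewrite mulmxA AB0 mul0mx.
case: (ord3P d) => -> in path_neq0 *; move: path_neq0;
  case: shape_s => [[c ->] | [a [c ->]] | [a ->]] path_neq0.
- by constructor 1; exists c.+1.
- by case: a path_neq0 => [|a]; rewrite /= killed ?eqxx.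
- case: a path_neq0 => [|a] path_neq0; first by constructor 1; exists 1%N.
  by rewrite /= killed ?eqxx in path_neq0.
- by constructor 2; exists 0%N, c.
- by case: a path_neq0 => [|a]; rewrite /= killed ?eqxx.
- case: a path_neq0 => [|a] path_neq0; first by constructor 2; exists 0%N, 0%N.
  by rewrite /= killed ?eqxx in path_neq0.
- case: c path_neq0 => [|c] path_neq0; first by constructor 3; exists 1%N.
  by rewrite /= killed ?eqxx in path_neq0.
- by constructor 2; exists a.+1, c.
- by constructor 3; exists a.+1.
Qed.

Lemma first_passage_neq0 s : first_passage s -> path s != 0 ->
  s = [:: lvl_down] \/ exists m, s = excursion m.
Proof.
move=> /andP [/eqP sum_s _] /path_mx_neq0_shape [[c Es] | [a [c Es]] | [a Es]];
  rewrite Es ?big_cat ?big_cons /= !sum_incr_nseq /incr /= in sum_s *.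
- by left; have -> : c = 1%N by lia.
- by right; exists a; have -> : c = a.+1 by lia.
- by lia.
Qed.

Lemma first_passage_mx1 : fp 1 = Lm1.
Proof.
apply: (@etrans _ _ (path [:: lvl_down])); last exact: mulmx1.
apply: first_passage_mx_eq_path; [by [] | exact: first_passage_down |].
move=> t fp_t /(first_passage_neq0 fp_t) [// | [m Et]].
by have := size_tuple t; rewrite Et size_excursion.
Qed.

Lemma first_passage_mx_excursion m : fp m.*2.+2 = path (excursion m).
Proof.
apply: first_passage_mx_eq_path; [exact: size_excursion | exact: first_passage_excursion |].
move=> t fp_t /(first_passage_neq0 fp_t) [Et | [m' Et]]; have := size_tuple t.
  by rewrite Et.
rewrite Et size_excursion => /succn_inj/succn_inj/double_inj m'_eq_m.
exact: etrans Et (congr1 excursion m'_eq_m).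
Qed.

Lemma first_passage_mx_no_word k : k != 1%N -> (forall m, k != m.*2.+2) -> fp k = 0.
Proof.
move=> k_neq1 k_neq_even; apply: first_passage_mx_eq0 => t fp_t; apply/eqP; apply: contraT.
move=> /(first_passage_neq0 fp_t) [Et | [m Et]]; have := size_tuple t; rewrite Et.
  by move=> k1; rewrite -k1 eqxx in k_neq1.
by rewrite size_excursion => km; have := k_neq_even m; rewrite km eqxx.
Qed.

Lemma first_passage_mx0 : fp 0 = 0.
Proof. exact: first_passage_mx_no_word. Qed.

Lemma first_passage_mx_odd m : fp m.*2.+3 = 0.
Proof.
apply: first_passage_mx_no_word => // m'; apply/eqP => /(congr1 odd).
by rewrite /= !odd_double.
Qed.

Lemma excursionS m : excursion m.+1 = lvl_up :: excursion m ++ [:: lvl_down].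
Proof. by rewrite /excursion -catA /= -(nseqD m 1) addn1. Qed.

Lemma first_passage_mx_rec k : fp k.+3 = L1 *m fp k.+1 *m Lm1.
Proof.
rewrite -[k]odd_double_half; case: (odd k); set m := k./2.
  rewrite (first_passage_mx_excursion m.+1) (first_passage_mx_excursion m).
  by rewrite excursionS [LHS]/= path_mx_cat /= mulmx1 mulmxA.
rewrite (first_passage_mx_odd m); case: m => [|m].
  by rewrite first_passage_mx1 L1Lm1 mul0mx.
by rewrite (first_passage_mx_odd m) mulmx0 mul0mx.
Qed.

Definition first_passage_sum N : 'M[R]_n := \sum_(k < N) fp k.

Definition passage_map (X : 'M[R]_n) : 'M[R]_n := Lm1 + L0 *m Lm1 + L1 *m X *m Lm1.

Lemma first_passage_sum_rec N :
  first_passage_sum N.+3 = passage_map (first_passage_sum N.+1).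
Proof.
rewrite /first_passage_sum /passage_map !big_ord_recl !lift0 first_passage_mx0 !add0r.
rewrite first_passage_mx1 (first_passage_mx_excursion 0) /= mulmx1 addrA.
rewrite mulmx_sumr mulmx_suml; congr (_ + _); apply: eq_bigr => i _.
exact: first_passage_mx_rec.
Qed.

Hypotheses (Lm1_ge0 : mx_nonneg Lm1) (L0_ge0 : mx_nonneg L0) (L1_ge0 : mx_nonneg L1).

Lemma path_mx_nonneg s : mx_nonneg (path s).
Proof.
elim: s => [|d s IHs] /=; first by move=> i j; rewrite mxE ler0n.
by apply: mx_nonneg_mul IHs; case: (ord3P d) => ->.
Qed.

Lemma first_passage_mx_nonneg k : mx_nonneg (fp k).
Proof. by move=> i j; rewrite summxE; apply: sumr_ge0 => t _; exact: path_mx_nonneg. Qed.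

Lemma first_passage_sum_nonneg N : mx_nonneg (first_passage_sum N).
Proof. by move=> i j; rewrite summxE; apply: sumr_ge0 => k _; exact: first_passage_mx_nonneg. Qed.

Lemma passage_map_mono X Y : mx_le X Y -> mx_le (passage_map X) (passage_map Y).
Proof.
by move=> hXY; apply: mx_leD (mx_le_refl _) (mx_le_mul2r Lm1_ge0 (mx_le_mul2l L1_ge0 hXY)).
Qed.

Lemma first_passage_sum_cvg Gs : mx_nonneg Gs -> mx_le (passage_map Gs) Gs ->
  exists2 S, mx_cvg first_passage_sum S & [/\ passage_map S = S, mx_nonneg S & mx_le S Gs].
Proof.
move=> Gs_ge0 Gs_super.
have sum_nondecr N : mx_le (first_passage_sum N) (first_passage_sum N.+1).
  by rewrite /first_passage_sum big_ord_recr; exact/mx_le_addr/first_passage_mx_nonneg.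
have Lm1_le : mx_le Lm1 Gs.
  apply: mx_le_trans Gs_super; rewrite /passage_map -addrA; apply: mx_le_addr.
  by apply: mx_nonnegD; do ?apply: mx_nonneg_mul.
have sum_le N : mx_le (first_passage_sum N) Gs.
  suff [] : mx_le (first_passage_sum N) Gs /\ mx_le (first_passage_sum N.+1) Gs by [].
  elim: N => [|N [le_N le_N1]].
    rewrite /first_passage_sum big_ord0 big_ord1 first_passage_mx0.
    by split; exact/mx_nonnegE.
  split=> //; case: N le_N {le_N1} => [_|N le_N].
    rewrite /first_passage_sum !big_ord_recl big_ord0 !lift0 first_passage_mx0.
    by rewrite first_passage_mx1 add0r addr0.
  by rewrite first_passage_sum_rec; exact: mx_le_trans (passage_map_mono le_N) Gs_super.
have [S sum_cvg] := mx_cvg_nondecreasing sum_nondecr sum_le.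
exists S => //; split.
- have map_cvg : mx_cvg (fun N => passage_map (first_passage_sum N.+1)) (passage_map S).
    apply: mx_cvgD (mx_cvg_cst _) _.
    exact: mx_cvgM (mx_cvgM (mx_cvg_cst L1) (mx_cvgS sum_cvg)) (mx_cvg_cst Lm1).
  apply: mx_cvg_unique map_cvg _.
  apply: eq_mx_cvg (mx_cvgS (mx_cvgS (mx_cvgS sum_cvg))) => N.
  by rewrite first_passage_sum_rec.
- apply/mx_nonnegE; apply: mx_le_cvg (mx_cvg_cst 0) sum_cvg _ => N.
  exact/mx_nonnegE/first_passage_sum_nonneg.
- exact: mx_le_cvg sum_cvg (mx_cvg_cst Gs) sum_le.
Qed.

End SkipFreeQBD.

Section UniformizedQBD.
Variables (R : realType) (p q : nat) (P : 'M[R]_(p + q)) (Psi : 'M[R]_(p, q)).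
Hypotheses (hP : substochastic P)
  (hPsi : is_min_nonneg_sol (fun Y => riccati_map P Y = Y *+ 2) Psi).

Local Notation W := (invmx (VU P Psi)).
Local Notation Am1 := (block_mx 0 0 0 W : 'M[R]_(p + q)).
Local Notation A0 := (block_mx 0 (ursubmx P) 0 0 : 'M[R]_(p + q)).
Local Notation A1 := (block_mx (ulsubmx P) 0 0 0 : 'M[R]_(p + q)).
Local Notation Gs := (block_mx 0 Psi 0 W : 'M[R]_(p + q)).

Lemma uniformized_passage_map X : passage_map Am1 A0 A1 X =
  block_mx 0 (ursubmx P *m W + ulsubmx P *m ursubmx X *m W) 0 W.
Proof.
rewrite /passage_map -[X]submxK !mulmx_block !(mulmx0, mul0mx, addr0, add0r).
by rewrite !add_block_mx !(addr0, add0r) block_mxKur.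
Qed.

Theorem uniformized_G_matrix : is_G_matrix Am1 A0 A1 Gs.
Proof.
have [_ Psi_ge0 _] := hPsi.
have W_ge0 := invmx_VU_nonneg hP hPsi.
have Ppp_ge0 := mx_nonneg_ulsubmx hP.1.
have Ppm_ge0 := mx_nonneg_ursubmx hP.1.
have Am1_ge0 : mx_nonneg Am1 by apply: mx_nonneg_block => //; exact: mx_nonneg0.
have A0_ge0 : mx_nonneg A0 by apply: mx_nonneg_block => //; exact: mx_nonneg0.
have A1_ge0 : mx_nonneg A1 by apply: mx_nonneg_block => //; exact: mx_nonneg0.
have G_ge0 : mx_nonneg Gs by apply: mx_nonneg_block => //; exact: mx_nonneg0.
have G_fix : mx_le (passage_map Am1 A0 A1 Gs) Gs.
  by rewrite uniformized_passage_map block_mxKur -min_sol_fixpoint //; exact: mx_le_refl.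
have [L1Lm1 L0L1 L0L0 Lm1L1 Lm1L0] :
    [/\ A1 *m Am1 = 0, A0 *m A1 = 0, A0 *m A0 = 0, Am1 *m A1 = 0 & Am1 *m A0 = 0].
  by split; rewrite mulmx_block !(mulmx0, mul0mx, addr0) block_mx0.
have [S S_cvg [S_fix S_ge0 S_le]] := first_passage_sum_cvg L1Lm1 L0L1 L0L0 Lm1L1 Lm1L0
  Am1_ge0 A0_ge0 A1_ge0 G_ge0 G_fix.
rewrite uniformized_passage_map in S_fix.
have S_ur_fix : ursubmx S = ursubmx P *m W + ulsubmx P *m ursubmx S *m W.
  by rewrite -{1}S_fix block_mxKur.
have S_ur_eq : ursubmx S = Psi.
  have S_ur_le : mx_le (ursubmx S) Psi by have := mx_le_ursubmx S_le; rewrite block_mxKur.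
  exact: (riccati_fixpoint_eq_min_sol hP hPsi (mx_nonneg_ursubmx S_ge0) S_ur_le S_ur_fix).
have S_eq : S = Gs by rewrite -S_fix S_ur_eq -(min_sol_fixpoint hP hPsi).
move=> i j; rewrite -S_eq.
have -> : (fun N => \sum_(k < N) first_passage_mx Am1 A0 A1 k i j) =
    (fun N => first_passage_sum Am1 A0 A1 N i j) by apply/funext => N; rewrite summxE.
exact: S_cvg.
Qed.

End UniformizedQBD.

Section Uniformization.
Variables (R : realType) (p q : nat) (T : 'M[R]_(p + q)) (lambda : R).

Local Notation P := (1%:M + lambda^-1 *: T).

Lemma uniformization_blocks : P = block_mx (1%:M + lambda^-1 *: ulsubmx T)
  (lambda^-1 *: ursubmx T) (lambda^-1 *: dlsubmx T) (1%:M + lambda^-1 *: drsubmx T).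
Proof. by rewrite -{1}[T]submxK (scalar_mx_block p q) scale_block_mx add_block_mx !add0r. Qed.

Lemma uniformization_substochastic : is_generator T -> 0 < lambda ->
  (forall i, `|T i i| <= lambda) -> substochastic P.
Proof.
move=> [T_offdiag T_rows] lambda_gt0 T_diag; split=> [i j|].
  rewrite !mxE; have lambdaV_gt0 : 0 < lambda^-1 by rewrite invr_gt0.
  case: eqP => [<- | /eqP i_neq_j] /=; last first.
    by rewrite add0r; apply: mulr_ge0; [exact: ltW | exact: T_offdiag].
  have := T_diag i; rewrite ler_norml => /andP [T_ii_ge _].
  have := ler_wpM2l (ltW lambdaV_gt0) T_ii_ge.
  by rewrite mulrN mulVf ?lt0r_neq0 //; lra.
have T_e : T *m (const_mx 1 : 'cV_(p + q)) = 0.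
  by apply/matrixP => i j; rewrite !mxE -[RHS](T_rows i); apply: eq_bigr => k _; rewrite mxE mulr1.
by rewrite mulmxDl mul1mx -scalemxAl T_e scaler0 addr0; exact: mx_le_refl.
Qed.

Lemma riccati_uniformizationE Y : lambda != 0 ->
  riccati T Y <-> riccati_map P Y = Y *+ 2.
Proof.
move=> lambda_neq0.
have scaled : riccati_map P Y - Y *+ 2 = lambda^-1 *:
    (ursubmx T + Y *m drsubmx T + ulsubmx T *m Y + Y *m dlsubmx T *m Y).
  rewrite /riccati_map uniformization_blocks block_mxKul block_mxKur block_mxKdl block_mxKdr.
  rewrite !scalerDr mulmxDr mulmxDl mulmx1 mul1mx -!scalemxAr -!scalemxAl.
  move: (lambda^-1 *: ursubmx T) (lambda^-1 *: (Y *m drsubmx T)).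
  move: (lambda^-1 *: (ulsubmx T *m Y)) (lambda^-1 *: (Y *m dlsubmx T *m Y)).
  by move=> c d a b; rewrite mulr2n; apply/matrixP => i j; rewrite !mxE; lra.
rewrite /riccati; split=> [ric0 | GY].
  by apply/eqP; rewrite -subr_eq0 scaled ric0 scaler0.
move: scaled; rewrite GY subrr => /esym/eqP.
by rewrite scaler_eq0 invr_eq0 (negbTE lambda_neq0) => /eqP.
Qed.

Lemma uniformization_VU Psi :
  1%:M - lambda^-1 *: (drsubmx T + dlsubmx T *m Psi) = VU P Psi.
Proof.
rewrite /VU /PU uniformization_blocks block_mxKdr block_mxKdl -scalemxAl scalerDr.
move: (lambda^-1 *: drsubmx T) (lambda^-1 *: (dlsubmx T *m Psi)) => a b.
by apply/matrixP => i j; rewrite !mxE; case: (i == j); rewrite /= ?mulr1n ?mulr0n; lra.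
Qed.

End Uniformization.

Theorem lemma1 (R : realType) (p q : nat) (T : 'M[R]_(p + q))
  (Psi : 'M[R]_(p, q)) (lambda : R) :
  (0 < p)%N -> (0 < q)%N ->
  is_generator T ->
  is_min_nonneg_sol (@riccati R p q T) Psi ->
  0 < lambda -> (forall i, `|T i i| <= lambda) ->
  let U : 'M[R]_q := drsubmx T + dlsubmx T *m Psi in
  let P : 'M[R]_(p + q) := 1%:M + lambda^-1 *: T in
  let V : 'M[R]_q := 1%:M - lambda^-1 *: U in
  let Am1 : 'M[R]_(p + q) := block_mx 0 0 0 (invmx V) in
  let A0 : 'M[R]_(p + q) := block_mx 0 (ursubmx P) 0 0 in
  let A1 : 'M[R]_(p + q) := block_mx (ulsubmx P) 0 0 0 in
  V \in unitmx /\ is_G_matrix Am1 A0 A1 (block_mx 0 Psi 0 (invmx V)).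
Proof.
move=> _ _ hT hPsi lambda_gt0 hdiag U P V Am1 A0 A1.
have hP : substochastic P := uniformization_substochastic hT lambda_gt0 hdiag.
have hPsiP : is_min_nonneg_sol (fun Y => riccati_map P Y = Y *+ 2) Psi.
  have <- : riccati T = fun Y => riccati_map P Y = Y *+ 2.
    apply/funext => Y; apply/propext.
    exact: riccati_uniformizationE (lt0r_neq0 lambda_gt0).
  exact: hPsi.
rewrite /Am1 /A0 /A1 /V /U uniformization_VU.
split; first exact: (VU_unitmx hP hPsiP).
exact: (uniformized_G_matrix hP hPsiP).
Qed.
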